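(* Let $\mathcal G$ be a real Lie algebra that is nilpotent of step at most $3$, i.e. $[\mathcal G,[\mathcal G,[\mathcal G,\mathcal G]]]=0$. Then there exist a linear endomorphism $f$ of $\mathcal G$ with $f([x,y])-[f(x),f(y)]\in\mathcal Z(\mathcal G)$ for all $x,y$, and an invertible linear endomorphism $d$ of $\mathcal G$ with $d[x,y]=[dx,fy]+[fx,dy]$ for all $x,y$, such that the product $xy:=d^{-1}[fx,dy]$ is left symmetric and compatible with the bracket, i.e. $(xy)z-x(yz)=(yx)z-y(xz)$ and $xy-yx=[x,y]$ for all $x,y,z$. Consequently every connected Lie group with Lie algebra $\mathcal G$ carries a flat torsion-free left invariant affine connection $\nabla$ with $\nabla_{x^+}y^+=(xy)^+$.
   Context: $\mathcal Z(\mathcal G)$ denotes the center of $\mathcal G$; $x^+$ is the left invariant vector field with value $x$ at the unit. *)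

From HB Require Import structures.
From mathcomp Require Import all_boot all_order all_algebra.
Set Implicit Arguments. Unset Strict Implicit. Unset Printing Implicit Defensive.
Import Order.TTheory GRing.Theory Num.Theory.
Local Open Scope ring_scope.

Definition is_lie_bracket (R : fieldType) (V : vectType R) (br : V -> V -> V) : Prop :=
  [/\ (forall x : V, linear (br x)),
      (forall y : V, linear (fun x => br x y)),
      (forall x : V, br x x = 0) &
      (forall x y z : V, br x (br y z) + br y (br z x) + br z (br x y) = 0)].

Definition nilpotent_step3 (R : fieldType) (V : vectType R) (br : V -> V -> V) : Prop :=
  forall x y z w : V, br x (br y (br z w)) = 0.

Definition in_center (R : fieldType) (V : vectType R) (br : V -> V -> V) (z : V) : Prop :=
  forall x : V, br x z = 0.

From HB Require Import structures.
From mathcomp Require Import all_boot all_order all_algebra.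
From mathcomp Require Import ring.
Import Order.TTheory GRing.Theory Num.Theory.
Set Implicit Arguments. Unset Strict Implicit. Unset Printing Implicit Defensive.
Local Open Scope ring_scope.

(* Let P project onto the derived algebra [G,G] and let [dil a b] act by a on
   the kernel of P and by b on [G,G].  Step <= 3 gives [[G,G],[G,G]] = 0 and
   [G,[G,[G,G]]] = 0, so the bracket of two such maps is a combination of
   [x,y], [x,Py] and [Px,y], the last two central.  Hence f = dil a a^2 is a
   homomorphism modulo the center, and its derivative d = dil 1 2a in a is an
   f-derivation exactly when a^2 = 2a - 2a^2, i.e. a = 2/3.  For any such pair
   with d invertible, xy := d^-1[fx,dy] satisfies d(xy) = [fx,dy], so the
   associator becomes a double bracket; Jacobi turns [[fx,fy],dz] into the
   required symmetric form, and the central defect of f dies in the bracket. *)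

Section LieBracket.

Variables (R : fieldType) (V : vectType R) (br : V -> V -> V).
Hypothesis hLie : is_lie_bracket br.

Definition ad (x : V) : {linear V -> V} :=
  HB.pack (br x) (GRing.isLinear.Build _ _ _ _ (br x)
                    (let: And4 linr _ _ _ := hLie in linr x)).

Definition rad (y : V) : {linear V -> V} :=
  HB.pack (br^~ y) (GRing.isLinear.Build _ _ _ _ (br^~ y)
                      (let: And4 _ linl _ _ := hLie in linl y)).

Lemma brDl x u v : br (u + v) x = br u x + br v x.
Proof. exact: (linearD (rad x) u v). Qed.
Lemma brDr x u v : br x (u + v) = br x u + br x v.
Proof. exact: (linearD (ad x) u v). Qed.
Lemma brBr x u v : br x (u - v) = br x u - br x v.
Proof. exact: (linearB (ad x) u v). Qed.
Lemma brZl x a u : br (a *: u) x = a *: br u x.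
Proof. exact: (linearZZ (rad x) a u). Qed.
Lemma brZr x a u : br x (a *: u) = a *: br x u.
Proof. exact: (linearZZ (ad x) a u). Qed.
Lemma brNr x u : br x (- u) = - br x u.
Proof. exact: (linearN (ad x) u). Qed.

Lemma br_suml n (F : 'I_n -> V) y :
  br (\sum_(i < n) F i) y = \sum_(i < n) br (F i) y.
Proof. exact: (linear_sum (rad y)). Qed.
Lemma br_sumr n (F : 'I_n -> V) x :
  br x (\sum_(i < n) F i) = \sum_(i < n) br x (F i).
Proof. exact: (linear_sum (ad x)). Qed.

Lemma br_anti x y : br x y = - br y x.
Proof.
have [_ _ brxx _] := hLie; apply/eqP; rewrite -addr_eq0.
by have := brxx (x + y); rewrite brDl !brDr !brxx add0r addr0 => ->.
Qed.

Lemma br_jacobi x y z : br (br x y) z = br x (br y z) - br y (br x z).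
Proof.
have [_ _ _ jacobi] := hLie.
move/eqP: (jacobi x y z); rewrite (br_anti z x) brNr addr_eq0 -(br_anti (br x y)).
by move=> /eqP ->.
Qed.

End LieBracket.

Section DerivedAlgebra.

Variables (R : fieldType) (V : vectType R) (br : V -> V -> V).
Hypothesis hLie : is_lie_bracket br.

Definition derived_space : {vspace V} :=
  (\sum_(i < \dim {:V}) \sum_(j < \dim {:V})
     <[br (vbasis {:V})`_i (vbasis {:V})`_j]>)%VS.

Lemma mem_derived_space x y : br x y \in derived_space.
Proof.
rewrite (coord_vbasis (memvf x)) (br_suml hLie); apply: memv_sumr => i _.
rewrite (brZl hLie); apply: memvZ.
rewrite (coord_vbasis (memvf y)) (br_sumr hLie); apply: memv_sumr => j _.
by rewrite (brZr hLie); apply/memvZ/memv_line.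
Qed.

Lemma derived_space_ind (W : lmodType R) (g : {linear V -> W}) c :
  (forall x y, g (br x y) = 0) -> c \in derived_space -> g c = 0.
Proof.
move=> g_br /memv_sumP[cs cs_in ->]; rewrite linear_sum big1 // => i _.
have /memv_sumP[ds ds_in ->] := cs_in i isT; rewrite linear_sum big1 // => j _.
by have /vlineP[k ->] := ds_in j isT; rewrite linearZZ g_br scaler0.
Qed.

Hypothesis hnil : nilpotent_step3 br.

Lemma br_br_derived z x c : c \in derived_space -> br z (br x c) = 0.
Proof.
by move=> c_in; apply: (derived_space_ind (g := ad hLie z \o ad hLie x) (hnil z x)).
Qed.

Lemma br_derived c c' :
  c \in derived_space -> c' \in derived_space -> br c c' = 0.
Proof.
move=> c_in c'_in; apply: (derived_space_ind (g := rad hLie c') _ c_in) => x y.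
apply: (derived_space_ind (g := ad hLie (br x y)) _ c'_in) => a b.
by rewrite /= (br_jacobi hLie) !hnil subrr.
Qed.

End DerivedAlgebra.

Lemma scale3_add_collapse (R : pzRingType) (V : lmodType R) (u v w : V)
    (a b c a' b' c' e : R) :
  a + a' = e -> b + b' = 0 -> c + c' = 0 ->
  a *: u + b *: v + c *: w + (a' *: u + b' *: v + c' *: w) = e *: u.
Proof.
move=> <- /addr0_eq <- /addr0_eq <-; rewrite !scaleNr scalerDl.
by rewrite addrACA subrr addr0 addrACA subrr addr0.
Qed.

Section Dilations.

Variables (R : fieldType) (V : vectType R) (br : V -> V -> V).
Hypotheses (hLie : is_lie_bracket br) (hnil : nilpotent_step3 br).

Local Notation P := (projv (derived_space br)).

Definition dil (a b : R) : 'End(V) := a *: \1%VF + (b - a) *: P.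

Lemma dilE a b x : dil a b x = a *: x + (b - a) *: P x.
Proof. by rewrite add_lfunE !scale_lfunE id_lfunE. Qed.

Lemma dil_derived a b c : c \in derived_space br -> dil a b c = b *: c.
Proof. by move=> c_in; rewrite dilE projv_id // -scalerDl addrC subrK. Qed.

Lemma proj_dil a b x : P (dil a b x) = b *: P x.
Proof. by rewrite dilE linearD !linearZ /= projv_proj -scalerDl addrC subrK. Qed.

Lemma dilM a b a' b' x : dil a b (dil a' b' x) = dil (a * a') (b * b') x.
Proof.
rewrite [LHS]dilE proj_dil !dilE !scalerDr !scalerA.
by rewrite -addrA -scalerDl; congr (_ + _ *: _); ring.
Qed.

Lemma dil1 x : dil 1 1 x = x.
Proof. by rewrite dilE subrr scale0r addr0 scale1r. Qed.

Lemma dilK a b : a != 0 -> b != 0 -> cancel (dil a b) (dil a^-1 b^-1).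
Proof. by move=> a0 b0 x; rewrite dilM !mulVf // dil1. Qed.

Lemma dilVK a b : a != 0 -> b != 0 -> cancel (dil a^-1 b^-1) (dil a b).
Proof. by move=> a0 b0 x; rewrite dilM !mulfV // dil1. Qed.

Lemma br_dil a b a' b' x y :
  br (dil a b x) (dil a' b' y)
  = (a * a') *: br x y + (a * (b' - a')) *: br x (P y)
    + ((b - a) * a') *: br (P x) y.
Proof.
rewrite !dilE (brDl hLie) !(brDr hLie) !(brZl hLie) !(brZr hLie).
rewrite (br_derived hLie hnil (memv_proj _ x) (memv_proj _ y)) !scaler0 addr0.
by rewrite !scalerA.
Qed.

Lemma dil_derivation a c x y : c = 2 * a - 2 * a ^+ 2 ->
  dil 1 (2 * a) (br x y)
  = br (dil 1 (2 * a) x) (dil a c y) + br (dil a c x) (dil 1 (2 * a) y).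
Proof.
move=> ->; rewrite (dil_derived _ _ (mem_derived_space hLie x y)) !br_dil.
by apply/esym/scale3_add_collapse; ring.
Qed.

Lemma dil_center a x y :
  in_center br (dil a (a ^+ 2) (br x y) - br (dil a (a ^+ 2) x) (dil a (a ^+ 2) y)).
Proof.
move=> z; rewrite (dil_derived _ _ (mem_derived_space hLie x y)) br_dil.
rewrite (brBr hLie) !(brDr hLie) !(brZr hLie).
rewrite (br_br_derived hLie hnil _ _ (memv_proj _ y)) (br_anti hLie (P x)) (brNr hLie).
rewrite (br_br_derived hLie hnil _ _ (memv_proj _ x)) oppr0 !scaler0 !addr0.
by rewrite expr2 subrr.
Qed.

End Dilations.

Section LeftSymmetricProduct.

Variables (R : fieldType) (V : vectType R) (br : V -> V -> V) (f d dinv : 'End(V)).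
Hypotheses (hLie : is_lie_bracket br) (dK : cancel d dinv) (dinvK : cancel dinv d).
Hypothesis d_der : forall x y, d (br x y) = br (d x) (f y) + br (f x) (d y).
Hypothesis f_br_center : forall x y, in_center br (f (br x y) - br (f x) (f y)).

Definition lsprod (x y : V) : V := dinv (br (f x) (d y)).

Lemma lsprod_sub x y : lsprod x y - lsprod y x = br x y.
Proof.
by rewrite /lsprod -linearB /= (br_anti hLie (f y)) opprK addrC -d_der dK.
Qed.

Lemma br_f_br x y w : br (f (br x y)) w = br (br (f x) (f y)) w.
Proof.
have /eqP := f_br_center x y w; rewrite (brBr hLie) subr_eq0 => /eqP fxy_w.
by rewrite (br_anti hLie) fxy_w -br_anti.
Qed.

Lemma lsprod_left_symmetric x y z :
  lsprod (lsprod x y) z - lsprod x (lsprod y z)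
  = lsprod (lsprod y x) z - lsprod y (lsprod x z).
Proof.
rewrite /lsprod !dinvK -!linearB; congr (dinv _).
have -> : dinv (br (f x) (d y)) = dinv (br (f y) (d x)) + br x y.
  by rewrite -[br x y](lsprod_sub x y) addrC subrK.
rewrite linearD (brDl hLie) br_f_br (br_jacobi hLie).
by rewrite addrA addrAC addrK.
Qed.

End LeftSymmetricProduct.

Theorem mainTheorem16 (R : rcfType) (V : vectType R) (br : V -> V -> V)
    (hLie : is_lie_bracket br) (hnil : nilpotent_step3 br) :
  exists (f d dinv : 'End(V)),
    [/\ (forall x y : V, in_center br (f (br x y) - br (f x) (f y))),
        cancel d dinv, cancel dinv d,
        (forall x y : V, d (br x y) = br (d x) (f y) + br (f x) (d y)) &
        let prod := fun x y : V => dinv (br (f x) (d y)) in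
        (forall x y z : V,
            prod (prod x y) z - prod x (prod y z)
          = prod (prod y x) z - prod y (prod x z)) /\
        (forall x y : V, prod x y - prod y x = br x y)].
Proof.
pose a : R := 2 / 3.
have a_sq : a ^+ 2 = 2 * a - 2 * a ^+ 2 by rewrite /a; field.
have a2_neq0 : 2 * a != 0 by rewrite /a !mulf_neq0 ?invr_eq0 ?pnatr_eq0.
pose f := dil br a (a ^+ 2).
pose d := dil br 1 (2 * a).
pose dinv := dil br 1^-1 (2 * a)^-1.
have dK : cancel d dinv := dilK br (oner_neq0 R) a2_neq0.
have dinvK : cancel dinv d := dilVK br (oner_neq0 R) a2_neq0.
have d_der x y : d (br x y) = br (d x) (f y) + br (f x) (d y).
  exact: (dil_derivation hLie hnil _ _ a_sq).
have f_cen x y : in_center br (f (br x y) - br (f x) (f y)).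
  exact: dil_center.
exists f, d, dinv; split => //.
exact: (conj (lsprod_left_symmetric hLie dK dinvK d_der f_cen)
             (lsprod_sub hLie dK d_der)).
Qed.
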